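(* Let $0\le\ell\le r$. Among all ideals $[I_0,\dots,I_\ell]$ of $\Omega_{H_\ell}$ with $I_0=p\mathbb{Z}$, the only prime ideal is $$\mathcal L^\ell(p)=[(p),J_{1,0}(p),\dots,J_{\ell,0}(p)].$$
   Context: Fix a prime $p$ and an integer $r\ge0$. For $0\le k\le r$ let $R_k$ be the commutative ring which is free as a $\mathbb{Z}$-module with basis $X_{k,0},\dots,X_{k,k}$ and multiplication $X_{k,i}X_{k,j}=p^{k-\max(i,j)}X_{k,\min(i,j)}$; thus $X_{k,k}=1$, and an integer $n$ is identified with $nX_{k,k}$. For $0\le k\le\ell\le r$ define: the additive map $\mathrm{ind}^\ell_k:R_k\to R_\ell$, $X_{k,i}\mapsto X_{\ell,i}$; the ring homomorphism $\mathrm{res}^\ell_k:R_\ell\to R_k$, $\mathrm{res}^\ell_k(X_{\ell,i})=p^{\ell-k}X_{k,i}$ if $i\le k$ and $=p^{\ell-i}$ if $i\ge k$; and the multiplicative map $\mathrm{jnd}^\ell_k:R_k\to R_\ell$, $$\mathrm{jnd}^\ell_k\Big(\sum_{i=0}^k m_iX_{k,i}\Big)=m_kX_{\ell,\ell}+\sum_{k\le i<\ell}\frac{m_k^{p^{\ell-i}}-m_k^{p^{\ell-i-1}}}{p^{\ell-i}}X_{\ell,i}+\sum_{0\le i<k}\frac{(\sum_{s=i}^k m_sp^{k-s})^{p^{\ell-k}}-(\sum_{s=i+1}^k m_sp^{k-s})^{p^{\ell-k}}}{p^{\ell-i}}X_{\ell,i}$$ ($m_i\in\mathbb{Z}$).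 For $k=\ell$ these maps are the identity. These data form the Burnside Tambara functor on $\mathbb{Z}/p^r\mathbb{Z}$; keeping indices $\le n$ gives $\Omega_{H_n}$. An ideal of $\Omega_{H_n}$ is a sequence $[I_0,\dots,I_n]$ of ideals $I_k\subseteq R_k$ such that for every $1\le k\le n$: $\mathrm{ind}^k_{k-1}(I_{k-1})\subseteq I_k$, $\mathrm{res}^k_{k-1}(I_k)\subseteq I_{k-1}$, $\mathrm{jnd}^k_{k-1}(I_{k-1})\subseteq I_k$. It is proper if $I_0\ne R_0$. A proper ideal is prime if for all $0\le\ell'\le k\le n$, $a\in R_k$, $b\in R_{\ell'}$: whenever $(\mathrm{jnd}^m_i\mathrm{res}^k_i(a))\cdot(\mathrm{jnd}^m_j\mathrm{res}^{\ell'}_j(b))\in I_m$ for all $0\le i\le k$, $0\le j\le\ell'$, $m=\max(i,j)$, then $a\in I_k$ or $b\in I_{\ell'}$. For an ideal $I\subseteq R_{k-1}$, $L(I)=(\mathrm{res}^k_{k-1})^{-1}(I)\subseteq R_k$; for $\mathscr I=[I_0,\dots,I_{k-1}]$, $\mathcal L\mathscr I=[I_0,\dots,I_{k-1},L(I_{k-1})]$, $\mathcal L^n$ its iterate, $(p)=[p\mathbb{Z}]$. For $0\le j\le i$, $F_{i,j}=X_{i,j}-p^{i-j}$; for $i\ge1$, $J_{i,0}(x)\subseteq R_i$ is the ideal generated by $x,F_{i,0},\dots,F_{i,i-1}$. *)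

(* The Burnside Tambara functor on Z/p^r, truncated at level n. *)
From HB Require Import structures.
From mathcomp Require Import all_boot all_order all_algebra.
Unset Printing Implicit Defensive.
Import Order.TTheory GRing.Theory Num.Theory.
Local Open Scope ring_scope.

(* R_k : element = coefficient vector (m_0,...,m_k) w.r.t. X_{k,0..k}. *)
Definition R (k : nat) := {ffun 'I_k.+1 -> int}.

Definition co (k : nat) (a : R k) (i : nat) : int :=
  if (i <= k)%N then a (@inord k i) else 0.

(* multiplication: X_{k,i} X_{k,j} = p^(k - max i j) X_{k, min i j} *)
Definition mulR (p k : nat) (a b : R k) : R k :=
  [ffun m : 'I_k.+1 => \sum_(i < k.+1) \sum_(j < k.+1)
     (if minn i j == m then a i * b j * (p%:Z) ^+ (k - maxn i j) else 0)].

Definition cst (k : nat) (x : int) : R k :=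
  [ffun m : 'I_k.+1 => if val m == k then x else 0].

(* ind^l_k : X_{k,i} |-> X_{l,i} *)
Definition ind (k l : nat) (a : R k) : R l := [ffun i : 'I_l.+1 => co k a i].

Definition res (p l k : nat) (a : R l) : R k :=
  [ffun j : 'I_k.+1 =>
     if (j < k)%N then (p%:Z) ^+ (l - k) * co l a j
     else \sum_(i < l.+1 | (k <= i)%N) (p%:Z) ^+ (l - i) * a i].

Definition Ssum (p k : nat) (a : R k) (i : nat) : int :=
  \sum_(s < k.+1 | (i <= s)%N) a s * (p%:Z) ^+ (k - s).

(* jnd^l_k (integer divisions are exact) *)
Definition jnd (p k l : nat) (a : R k) : R l :=
  [ffun i : 'I_l.+1 =>
     if val i == l then co k a k
     else if (k <= i)%N then
       ((co k a k ^+ (p ^ (l - i)) - co k a k ^+ (p ^ (l - i - 1))) %/ ((p%:Z) ^+ (l - i)))%Z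
     else
       ((Ssum p k a i ^+ (p ^ (l - k)) - Ssum p k a i.+1 ^+ (p ^ (l - k)))
          %/ ((p%:Z) ^+ (l - i)))%Z].

Definition is_idealR (p k : nat) (I : R k -> Prop) : Prop :=
  [/\ I 0,
      (forall a b, I a -> I b -> I (a + b)),
      (forall a, I a -> I (- a)) &
      (forall c a, I a -> I (mulR p k c a))].

(* an ideal [I_0, ..., I_n] of Omega_{H_n} (only levels k <= n matter) *)
Definition idfamily := forall k : nat, R k -> Prop.

Definition is_ideal (p n : nat) (I : idfamily) : Prop :=
  (forall k, (k <= n)%N -> is_idealR p k (I k)) /\
  (forall k, (k < n)%N ->
     [/\ (forall a : R k, I k a -> I k.+1 (ind k k.+1 a)),
         (forall a : R k.+1, I k.+1 a -> I k (res p k.+1 k a)) &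
         (forall a : R k, I k a -> I k.+1 (jnd p k k.+1 a))]).

Definition proper (I : idfamily) : Prop := ~ (forall a : R 0, I 0 a).

Definition prime_ideal (p n : nat) (I : idfamily) : Prop :=
  proper I /\
  forall (l' k : nat), (l' <= k)%N -> (k <= n)%N ->
  forall (a : R k) (b : R l'),
    (forall i j, (i <= k)%N -> (j <= l')%N ->
       I (maxn i j) (mulR p (maxn i j) (jnd p i (maxn i j) (res p k i a))
                            (jnd p j (maxn i j) (res p l' j b)))) ->
    I k a \/ I l' b.

Fixpoint Lp (p : nat) (k : nat) : R k -> Prop :=
  match k return R k -> Prop with
  | 0 => fun a => (p%:Z %| a ord0)%Z
  | k'.+1 => fun a => Lp p k' (res p k'.+1 k' a)
  end.

(* F_{i,j} = X_{i,j} - p^(i-j) *)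
Definition F (p i j : nat) : R i :=
  [ffun m : 'I_i.+1 => (val m == j)%:Z - (val m == i)%:Z * (p%:Z) ^+ (i - j)].

Definition J (p i : nat) (x : int) (a : R i) : Prop :=
  exists (c0 : R i) (c : 'I_i -> R i),
    a = mulR p i c0 (cst i x) + \sum_(j < i) mulR p i (c j) (F p i j).

From HB Require Import structures.
From mathcomp Require Import all_boot all_order all_algebra.
From Corelib Require Import Setoid.
Import Order.TTheory GRing.Theory Num.Theory.
Local Open Scope ring_scope.

(* Everything is governed by the coefficient [topc a] of X_{k,k} = 1 in
   a : R_k.  It is a ring homomorphism R_k -> Z, it is preserved by jnd,
   killed by ind (into a higher level) and preserved modulo p by res.
   Hence L^k(p) is the kernel of R_k -> Z -> Z/p (Lp_topc); from this it
   follows directly that L(p) is an ideal of Omega_{H_l}, that it is prime,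
   and that at level k it is generated by p and the F_{k,j}.

   For uniqueness, let I be a prime ideal with I_0 = (p).  Iterated
   restriction gives I <= L(p).  Conversely, assume L^m(p) <= I_m for all
   m <= k.  Primality applied to X_{k+1,k} = ind(1) puts it in I_{k+1}: every
   lower-level product lies in L(p), and the top-level ones are of the form
   ind(1) z = ind(res z) (Frobenius).  Then ind(R_k) <= I_{k+1}, the identity
   p = jnd(p) + ind(c) puts p in I_{k+1}, and R_{k+1} = ind(R_k) + Z 1
   finishes the induction. *)

(* The coefficient of X_{k,k} = 1. *)
Definition topc {k : nat} (a : R k) : int := a ord_max.

Lemma co_ord (k : nat) (a : R k) (t : 'I_k.+1) : co k a t = a t.
Proof. by rewrite /co -ltnS ltn_ord inord_val. Qed.

Lemma co_top (k : nat) (a : R k) : co k a k = topc a.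
Proof. by rewrite -[k]/(nat_of_ord (@ord_max k)) co_ord. Qed.

Lemma co_out (k : nat) (a : R k) (i : nat) : (k < i)%N -> co k a i = 0.
Proof. by rewrite /co ltnNge => /negbTE ->. Qed.

Lemma sum_pick (n : nat) (f : nat -> int) (m : nat) :
  \sum_(j < n) (if (j : nat) == m then f j else 0) = if (m < n)%N then f m else 0.
Proof.
case: ltnP => hm; last first.
  by apply: big1 => j _; case: eqP => // hjm; move: (ltn_ord j); rewrite hjm ltnNge hm.
rewrite (bigD1 (Ordinal hm)) //= eqxx big1 ?addr0 // => j hj.
by case: eqP => // hjm; move: hj; rewrite (_ : j = Ordinal hm) ?eqxx //; apply: val_inj.
Qed.

Lemma mulRC (p k : nat) (a b : R k) : mulR p k a b = mulR p k b a.
Proof.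
apply/ffunP=> m; rewrite !ffunE exchange_big /=.
apply: eq_bigr => i _; apply: eq_bigr => j _.
by rewrite minnC maxnC [a j * _]mulrC.
Qed.

Lemma topcD (k : nat) (a b : R k) : topc (a + b) = topc a + topc b.
Proof. by rewrite /topc ffunE. Qed.

Lemma topcN (k : nat) (a : R k) : topc (- a) = - topc a.
Proof. by rewrite /topc ffunE. Qed.

Lemma topc0 (k : nat) : topc (0 : R k) = 0.
Proof. by rewrite /topc ffunE. Qed.

Lemma topc_cst (k : nat) (x : int) : topc (cst k x) = x.
Proof. by rewrite /topc ffunE /= eqxx. Qed.

(* [topc] is multiplicative: X_{k,i} X_{k,j} has a top component only for i = j = k. *)
Lemma topcM (p k : nat) (a b : R k) : topc (mulR p k a b) = topc a * topc b.
Proof.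
rewrite /topc ffunE big_ord_recr /= big1 ?add0r; last first.
  move=> i _; apply: big1 => j _.
  have : (minn (widen_ord (leqnSn k) i) j < k)%N by rewrite /= gtn_min ltn_ord.
  by case: eqP => // ->; rewrite ltnn.
rewrite big_ord_recr /= big1 ?add0r; last first.
  move=> j _; have : (minn k (widen_ord (leqnSn k) j) < k)%N.
    by rewrite /= gtn_min ltn_ord orbT.
  by case: eqP => // ->; rewrite ltnn.
by rewrite minnn eqxx maxnn subnn expr0 mulr1.
Qed.

Lemma mulR_cstl (p k : nat) (x : int) (b : R k) (m : 'I_k.+1) :
  mulR p k (cst k x) b m = x * b m.
Proof.
rewrite ffunE big_ord_recr /= big1 ?add0r; last first.
  move=> i _; apply: big1 => j _; rewrite ffunE /= (ltn_eqF (ltn_ord i)).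
  by rewrite !mul0r if_same.
rewrite ffunE /= eqxx.
under eq_bigr => j _ do
  rewrite (minn_idPr (leq_ord j)) (maxn_idPl (leq_ord j)) subnn expr0 mulr1.
rewrite (bigD1 m) //= eqxx big1 ?addr0 // => j hj.
by case: eqP => // /val_inj hjm; rewrite hjm eqxx in hj.
Qed.

Lemma cst_mul (p k : nat) (x y : int) : cst k (x * y) = mulR p k (cst k x) (cst k y).
Proof. by apply/ffunP => m; rewrite mulR_cstl !ffunE; case: eqP; rewrite ?mulr0. Qed.

Lemma topc_ind (k l : nat) (a : R k) : (k < l)%N -> topc (ind k l a) = 0.
Proof. by move=> hkl; rewrite /topc ffunE co_out. Qed.

Lemma topc_jnd (p k l : nat) (a : R k) : topc (jnd p k l a) = topc a.
Proof. by rewrite /topc ffunE /= eqxx co_top. Qed.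

Lemma topc_res (p l k : nat) (a : R l) :
  topc (res p l k a) = \sum_(i < l.+1 | (k <= i)%N) (p%:Z) ^+ (l - i) * a i.
Proof. by rewrite /topc ffunE /= ltnn. Qed.

Lemma topc_res_mod (p l k : nat) (a : R l) : (k <= l)%N ->
  (p%:Z %| topc (res p l k a) - topc a)%Z.
Proof.
move=> hkl; rewrite topc_res big_mkcond big_ord_recr /= hkl subnn expr0 mul1r.
rewrite addrK; apply: rpred_sum => i _; case: ifP => _; last exact: dvdz0.
by apply: dvdz_mulr; apply: dvdz_exp (dvdzz _); rewrite subn_gt0.
Qed.

Lemma topc_res_dvd (p l k : nat) (a : R l) : (k <= l)%N ->
  (p%:Z %| topc (res p l k a))%Z = (p%:Z %| topc a)%Z.
Proof.
move=> hkl; rewrite -(subrK (topc a) (topc (res p l k a))).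
by rewrite rpredDl // topc_res_mod.
Qed.

Lemma res_id (p k : nat) (a : R k) : res p k k a = a.
Proof.
apply/ffunP=> j; rewrite ffunE; case: ifP => hj.
  by rewrite subnn expr0 mul1r co_ord.
have -> : j = ord_max.
  by apply: val_inj => /=; apply/eqP; rewrite eqn_leq -ltnS ltn_ord leqNgt hj.
rewrite big_mkcond big_ord_recr /= big1 ?add0r.
  by rewrite leqnn subnn expr0 mul1r.
by move=> i _; rewrite leqNgt ltn_ord.
Qed.

Lemma res_succE (p k : nat) (z : R k.+1) (t : 'I_k.+1) :
  res p k.+1 k z t = if (t < k)%N then p%:Z * co k.+1 z t
                     else p%:Z * co k.+1 z k + topc z.
Proof.
rewrite ffunE subSnn expr1; case: ifP => // _.
rewrite big_mkcond big_ord_recr big_ord_recr /= big1 ?add0r.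
  rewrite leqnn leqnSn subnn subSnn expr0 expr1 mul1r; congr (_ * _ + _).
  by rewrite /co leqnSn; congr (z _); apply: val_inj; rewrite /= inordK.
by move=> i _; rewrite leqNgt ltn_ord.
Qed.

Lemma Ssum_step (p k : nat) (a : R k) (i : nat) : (i <= k)%N ->
  Ssum p k a i = co k a i * (p%:Z) ^+ (k - i) + Ssum p k a i.+1.
Proof.
move=> hik; rewrite /Ssum (bigD1 (inord i)) /=; last by rewrite inordK.
rewrite inordK // /co hik; congr (_ + _); apply: eq_bigl => s.
rewrite ltn_neqAle; case: (i <= s)%N; rewrite ?andbF ?andbT //; congr negb.
apply/eqP/eqP => [->|H]; first by rewrite inordK.
by apply: val_inj; rewrite /= inordK.
Qed.

Lemma Ssum_cst (p k : nat) (x : int) (i : nat) : (i <= k)%N -> Ssum p k (cst k x) i = x.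
Proof.
move=> hi; rewrite /Ssum big_mkcond big_ord_recr /= big1 ?add0r.
  by rewrite ffunE /= eqxx hi subnn expr0 mulr1.
by move=> j _; rewrite ffunE /= (ltn_eqF (ltn_ord j)) mul0r; case: ifP.
Qed.

(* Norm induction to the same level is the identity (the divisions by powers of p are exact). *)
Lemma jnd_id (p k : nat) (a : R k) : (0 < p)%N -> jnd p k k a = a.
Proof.
move=> hp; apply/ffunP=> i; rewrite ffunE.
case: eqP => hi; first by rewrite co_top /topc; congr (a _); apply: val_inj.
have hik : (i < k)%N.
  by move: (ltn_ord i) hi; rewrite ltnS leq_eqVlt => /orP[/eqP|].
rewrite leqNgt hik /= subnn expn0 !expr1 Ssum_step ?(ltnW hik) // addrK mulzK.
  by rewrite co_ord.
by rewrite expf_neq0 // -lt0n.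
Qed.

Lemma ind_cstE (k l : nat) (c : int) (m : 'I_l.+1) : (k <= l)%N ->
  ind k l (cst k c) m = if val m == k then c else 0.
Proof.
move=> hkl; rewrite ffunE /co; case: leqP => hm.
  by rewrite ffunE /= inordK.
by rewrite (gtn_eqF hm).
Qed.

Lemma jnd_cst (p k : nat) (x : int) :
  exists c : int, cst k.+1 x = jnd p k k.+1 (cst k x) + ind k k.+1 (cst k c).
Proof.
exists (- ((x ^+ (p ^ 1) - x ^+ (p ^ 0)) %/ (p%:Z) ^+ 1)%Z).
apply/ffunP => m; rewrite [RHS]ffunE ind_cstE // !ffunE co_top topc_cst.
case: (ltngtP m k.+1) => hm.
- case: (ltngtP m k) => hm2.
  + by rewrite !Ssum_cst ?(ltnW hm2) // subrr div0z addr0.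
  + by move: hm; rewrite ltnS leqNgt hm2.
  + by rewrite hm2 subSnn subnn addrN.
- by move: (ltn_ord m); rewrite ltnNge hm.
- by rewrite [val m]hm (gtn_eqF (ltnSn k)) addr0.
Qed.

Lemma ind_add (k l : nat) (a b : R k) : ind k l (a + b) = ind k l a + ind k l b.
Proof. by apply/ffunP => m; rewrite !ffunE /co; case: ifP; rewrite ?ffunE ?addr0. Qed.

Lemma ind_cst (p k : nat) (c : int) :
  ind k k.+1 (cst k c) = mulR p k.+1 (cst k.+1 c) (ind k k.+1 (cst k 1)).
Proof.
apply/ffunP => m; rewrite mulR_cstl !ind_cstE //.
by case: eqP; rewrite ?mulr1 ?mulr0.
Qed.

Lemma frobenius_ind1 (p k : nat) (z : R k.+1) :
  mulR p k.+1 (ind k k.+1 (cst k 1)) z = ind k k.+1 (res p k.+1 k z).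
Proof.
apply/ffunP => m; rewrite !ffunE.
rewrite (bigD1 (Ordinal (leqW (ltnSn k)))) //=.
rewrite [X in _ + X]big1 ?addr0; last first.
  move=> i hi; apply: big1 => j _; rewrite ind_cstE //.
  have -> : (val i == k) = false.
    by apply/negbTE; apply: contra hi => /eqP h; apply/eqP/val_inj.
  by rewrite /= !mul0r if_same.
rewrite ind_cstE //= eqxx big_ord_recr big_ord_recr /= !mul1r.
under eq_bigr => j _ do rewrite mul1r (minn_idPr (ltnW (ltn_ord j)))
  (maxn_idPl (ltnW (ltn_ord j))) subSnn expr1 -[z _](co_ord _ z) /=.
rewrite (sum_pick _ (fun j => co k.+1 z j * p%:Z)) minnn maxnn subSnn expr1.
rewrite (minn_idPl (leqnSn k)) (maxn_idPr (leqnSn k)) subnn expr0.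
rewrite /co; case: (ltngtP m k) => hm.
- have hm1 : (m <= k.+1)%N by rewrite ltnW // ltnW.
  have hv : val (inord m : 'I_k.+1) = m by apply: inordK; rewrite ltnS ltnW.
  by rewrite hm1 res_succE hv hm /co hm1 !addr0 mulrC.
- by [].
- have hv : val (inord k : 'I_k.+1) = k by apply: inordK.
  rewrite hm res_succE hv ltnn /co leqnSn add0r mulr1 mulrC; congr (_ + _).
  by congr (_ * z _); apply: val_inj; rewrite /= inordK.
Qed.

Lemma R_succ_decomp (k : nat) (a : R k.+1) :
  exists b : R k, a = ind k k.+1 b + cst k.+1 (topc a).
Proof.
exists [ffun t : 'I_k.+1 => co k.+1 a t]; apply/ffunP => m; rewrite !ffunE /co.
case: (ltngtP m k.+1) => hm.
- rewrite -ltnS hm ffunE /= inordK // (ltnW hm) addr0.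
  by rewrite -[in LHS](inord_val m).
- by move: (ltn_ord m); rewrite ltnNge hm.
- rewrite hm ltnn add0r /topc; congr (a _); exact: val_inj.
Qed.

Lemma Lp_topc (p k : nat) (a : R k) : Lp p k a <-> (p%:Z %| topc a)%Z.
Proof.
elim: k a => [|k IH] a /=; last by rewrite IH topc_res_dvd.
by rewrite (_ : ord0 = ord_max) //; apply: val_inj.
Qed.

Lemma Lp_res (p l k : nat) (a : R l) : (k <= l)%N -> Lp p l a -> Lp p k (res p l k a).
Proof. by move=> hkl; rewrite !Lp_topc topc_res_dvd. Qed.

Lemma Lp_jnd (p k l : nat) (a : R k) : Lp p k a -> Lp p l (jnd p k l a).
Proof. by rewrite !Lp_topc topc_jnd. Qed.

Lemma Lp_ind (p k l : nat) (a : R k) : (k < l)%N -> Lp p l (ind k l a).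
Proof. by move=> hkl; rewrite Lp_topc topc_ind // dvdz0. Qed.

Lemma Lp_mul (p k : nat) (a b : R k) : Lp p k b -> Lp p k (mulR p k a b).
Proof. by rewrite !Lp_topc topcM; apply: dvdz_mull. Qed.

Lemma Lp_idealR (p k : nat) : is_idealR p k (Lp p k).
Proof.
split; last exact: Lp_mul.
- by rewrite Lp_topc topc0 dvdz0.
- by move=> a b; rewrite !Lp_topc topcD; apply: rpredD.
- by move=> a; rewrite !Lp_topc topcN rpredN.
Qed.

Lemma Lp_is_ideal (p n : nat) : is_ideal p n (Lp p).
Proof.
split=> [k _|k _]; first exact: Lp_idealR.
split=> a; [by move=> _; apply: Lp_ind | exact: Lp_res | exact: Lp_jnd].
Qed.

(* L(p) is prime: its top-coefficient test reduces primality to Euclid's lemma. *)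
Lemma Lp_prime (p n : nat) : prime p -> prime_ideal p n (Lp p).
Proof.
move=> hp; split.
  move/(_ (cst 0 1)); rewrite /= ffunE /= dvdz1 /= => /eqP hp1.
  by move: hp; rewrite hp1.
move=> l' k hlk hk a b /(_ k l' (leqnn k) (leqnn l')).
rewrite !res_id !Lp_topc topcM !topc_jnd !dvdzE abszM /= Euclid_dvdM //.
by move/orP.
Qed.

Lemma topc_F (p k : nat) (j : 'I_k) : topc (F p k j) = - (p%:Z) ^+ (k - j).
Proof. by rewrite /topc ffunE /= (gtn_eqF (ltn_ord j)) eqxx /= mul1r sub0r. Qed.

Lemma J_sub_Lp (p k : nat) (x : int) (a : R k) :
  (p%:Z %| x)%Z -> J p k x a -> Lp p k a.
Proof.
move=> px [c0 [c ->]]; rewrite Lp_topc topcD topcM topc_cst.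
apply: rpredD; first exact: dvdz_mull.
rewrite /topc sum_ffunE; apply: rpred_sum => j _.
rewrite -/(topc _) topcM topc_F mulrN rpredN; apply: dvdz_mull.
by apply: dvdz_exp (dvdzz _); rewrite subn_gt0.
Qed.

(* Conversely a = (topc a + S)/p * p + sum_j a_j F_{k,j}, with S = sum_{j<k} a_j p^(k-j). *)
Lemma Lp_sub_J (p k : nat) (a : R k) : Lp p k a -> J p k (p%:Z) a.
Proof.
rewrite Lp_topc => ha.
set S := \sum_(j < k) co k a j * (p%:Z) ^+ (k - j).
have hS : (p%:Z %| topc a + S)%Z.
  apply: rpredD => //; apply: rpred_sum => j _; apply: dvdz_mull.
  by apply: dvdz_exp (dvdzz _); rewrite subn_gt0.
exists (cst k ((topc a + S) %/ p%:Z)%Z), (fun j => cst k (co k a j)).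
apply/ffunP => m; rewrite ffunE sum_ffunE mulRC mulR_cstl ffunE.
under eq_bigr => j _ do rewrite mulR_cstl ffunE.
case: (ltnP m k) => hm.
  rewrite (ltn_eqF hm) mulr0 add0r; under eq_bigr => j _ do rewrite /= mul0r subr0.
  rewrite (bigD1 (Ordinal hm)) //= eqxx mulr1 big1 ?addr0 ?co_ord // => j hj.
  by case: eqP => [hmj|]; [case/eqP: hj; apply: val_inj | rewrite mulr0].
have -> : m = ord_max by apply: val_inj; apply/eqP; rewrite eqn_leq hm -ltnS ltn_ord.
rewrite /= eqxx mulrC divzK //.
under eq_bigr => j _ do rewrite (gtn_eqF (ltn_ord j)) /= mul1r sub0r mulrN.
by rewrite sumrN /S addrK.
Qed.

Section Uniqueness.

Variables (p l : nat) (I : idfamily).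
Hypothesis p_prime : prime p.
Hypothesis I_ideal : is_ideal p l I.
Hypothesis I_level0 : forall a : R 0, I 0%N a <-> (p%:Z %| a ord0)%Z.
Hypothesis I_prime : prime_ideal p l I.

(* Restricting down to level 0 shows I <= L(p). *)
Lemma I_sub_Lp (k : nat) (a : R k) : (k <= l)%N -> I k a -> Lp p k a.
Proof.
elim: k a => [|k IH] a hk ha /=; first exact/I_level0.
have [_ hres _] := I_ideal.2 k hk.
exact: IH _ (ltnW hk) (hres _ ha).
Qed.

Section Step.

Variable k : nat.
Hypothesis hk : (k < l)%N.
Hypothesis Lp_sub_I_below : forall (m : nat) (a : R m), (m <= k)%N -> Lp p m a -> I m a.

(* By Frobenius reciprocity ind(1) z lies in ind(L^k(p)), hence in I_{k+1}. *)
Lemma ind1_mul_in_I (z : R k.+1) :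
  Lp p k.+1 z -> I k.+1 (mulR p k.+1 (ind k k.+1 (cst k 1)) z).
Proof.
move=> hz; have [hind _ _] := I_ideal.2 k hk.
by rewrite frobenius_ind1; apply/hind/Lp_sub_I_below.
Qed.

(* Primality of I applied to X_{k+1,k} = ind(1): all test products lie in L(p). *)
Lemma ind1_in_I : I k.+1 (ind k k.+1 (cst k 1)).
Proof.
set X := ind k k.+1 (cst k 1).
have factor_Lp (i m : nat) : (i <= k.+1)%N -> Lp p m (jnd p i m (res p k.+1 i X)).
  by move=> hi; apply/Lp_jnd/Lp_res/Lp_ind.
suff : I k.+1 X \/ I k.+1 X by case.
apply: (I_prime.2 k.+1 k.+1 (leqnn _) hk) => i j hi hj.
case: (ltnP (maxn i j) k.+1) => hmax.
  by apply/Lp_sub_I_below/Lp_mul/factor_Lp.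
have -> : maxn i j = k.+1 by apply/eqP; rewrite eqn_leq hmax geq_max hi hj.
have [-> | hik] := eqVneq i k.+1.
  by rewrite res_id jnd_id ?prime_gt0 //; apply/ind1_mul_in_I/factor_Lp.
have -> : j = k.+1.
  by apply/eqP; move: hmax; rewrite leq_max leqNgt ltn_neqAle hik hi /= eqn_leq hj.
by rewrite res_id jnd_id ?prime_gt0 // mulRC; apply/ind1_mul_in_I/factor_Lp.
Qed.

(* Split b = (b - topc b) + topc b: the first part is in L^k(p), the second
   induces a multiple of ind(1). *)
Lemma ind_in_I (b : R k) : I k.+1 (ind k k.+1 b).
Proof.
have [hind _ _] := I_ideal.2 k hk; have [_ Iadd _ Imul] := I_ideal.1 k.+1 hk.
rewrite -(subrK (cst k (topc b)) b) ind_add; apply: Iadd.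
  apply/hind/Lp_sub_I_below => //.
  by rewrite Lp_topc topcD topcN topc_cst subrr dvdz0.
by rewrite (ind_cst p); apply/Imul/ind1_in_I.
Qed.

(* p 1 = jnd(p 1) + ind(c). *)
Lemma cst_p_in_I : I k.+1 (cst k.+1 p).
Proof.
have [_ _ hjnd] := I_ideal.2 k hk; have [_ Iadd _ _] := I_ideal.1 k.+1 hk.
have [c ->] := jnd_cst p k p; apply: Iadd; last exact: ind_in_I.
by apply/hjnd/Lp_sub_I_below; rewrite // Lp_topc topc_cst.
Qed.

(* a = ind(b) + (topc a / p) p 1. *)
Lemma Lp_sub_I_succ (a : R k.+1) : Lp p k.+1 a -> I k.+1 a.
Proof.
have [_ Iadd _ Imul] := I_ideal.1 k.+1 hk.
move=> /Lp_topc ha; have [b ->] := R_succ_decomp _ a.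
apply: Iadd; first exact: ind_in_I.
by rewrite -(divzK ha) (cst_mul p); apply/Imul/cst_p_in_I.
Qed.

End Step.

Lemma Lp_sub_I (k : nat) (a : R k) : (k <= l)%N -> Lp p k a -> I k a.
Proof.
have below : forall n, (n <= l)%N -> forall (m : nat) (b : R m), (m <= n)%N -> Lp p m b -> I m b.
  elim=> [|n IH] hn m b hm.
    by move: b; rewrite (_ : m = 0%N) => [b /I_level0 //|]; apply/eqP; rewrite -leqn0.
  have [hm' | hm'] := ltnP m n.+1; first exact: IH (ltnW hn) m b hm'.
  have em : m = n.+1 by apply/eqP; rewrite eqn_leq hm hm'.
  by move: b; rewrite em; apply: Lp_sub_I_succ hn (IH (ltnW hn)).
by move=> hk; apply: below hk k a (leqnn k).
Qed.

End Uniqueness.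

Theorem proposition6 (p r l : nat) (hp : prime p) (hlr : (l <= r)%N) :
  (forall k, (1 <= k <= l)%N -> forall a : R k, Lp p k a <-> J p k (p%:Z) a) /\
  is_ideal p l (Lp p) /\ prime_ideal p l (Lp p) /\
  (forall I : idfamily, is_ideal p l I ->
     (forall a : R 0, I 0%N a <-> (p%:Z %| a ord0)%Z) ->
     prime_ideal p l I ->
     forall k, (k <= l)%N -> forall a : R k, I k a <-> Lp p k a).
Proof.
split; first by move=> k _ a; split; [exact: Lp_sub_J | exact: J_sub_Lp (dvdzz _)].
split; first exact: Lp_is_ideal.
split; first exact: Lp_prime.
move=> I hI hI0 hIprime k hk a; split.
- exact: I_sub_Lp hI hI0 k a hk.
- exact: Lp_sub_I hp hI hI0 hIprime k a hk.
Qed.
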